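(* Let $T=T_\lambda(r,m)$ with $r=m$, $n\ge3$, and suppose $T$ acts linearly and inner faithfully on $\Bbbk\overline{Q}$ by $$g\cdot e_i=e_{i+d},\quad g\cdot a_i=\mu_i a_{i+d},\quad g\cdot a_i^*=\mu_i^*a_{i+d}^*,$$ $$x\cdot e_i=\gamma_i(e_i-\lambda^{-1}e_{i+d}),\quad x\cdot a_i=\gamma_{i+1}a_i-\gamma_i\lambda^{-1}(g\cdot a_i),\quad x\cdot a_i^*=\gamma_i a_i^*-\gamma_{i+1}\lambda^{-1}(g\cdot a_i^* ),$$ for some integer $0<d\le n-1$ and scalars $\mu_i,\mu_i^*,\gamma_i\in\Bbbk^\times$, and that this action descends to an inner faithful action on $\Pi_Q$. Let $\tau=\gcd(n,d)$, so that $e_0,\dots,e_{\tau-1}$ form a complete set of representatives of the $g$-orbits on vertices. Then $\{\phi_0(e_i): i=0,\dots,\tau-1\}$ is a $\Bbbk$-basis of the degree-$0$ part $((\Pi_Q)^T)_0$ of the invariant ring; in particular the number of vertices supporting $(\Pi_Q)^T$ equals the number of $g$-orbits of vertices.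
   Context: Let $\Bbbk$ be a field, $r>1$ and $m$ positive integers with $r\mid m$, and $\lambda\in\Bbbk$ a primitive $r$-th root of unity, with $r$ coprime to the characteristic of $\Bbbk$. The generalized Taft algebra $T=T_\lambda(r,m)$ is the Hopf algebra generated by $g,x$ with relations $gx=\lambda xg$, $g^m=1$, $x^r=0$, $\Delta(g)=g\otimes g$, $\Delta(x)=1\otimes x+x\otimes g$, $\varepsilon(g)=1,\varepsilon(x)=0$, $S(g)=g^{-1}$, $S(x)=-xg^{-1}$. An action of $T$ on an algebra $A$ is a $T$-module algebra structure; so $g$ acts by an algebra automorphism and $x\cdot(ab)=a(x\cdot b)+(x\cdot a)(g\cdot b)$. It is inner faithful if no nonzero Hopf ideal $I$ of $T$ satisfies $I\cdot A=0$. Linear means $g$ preserves path length and $x$ maps vertices into the span of vertices and arrows into the span of vertices and arrows. Vertex indices are taken modulo $n$. $\overline{Q}$ has vertices $0,\dots,n-1$ and arrows $a_i:i\to i+1$, $a_i^*:i+1\to i$; in $\Bbbk\overline{Q}$, $e_i$ is the trivial path at $i$ and $pq$ is concatenation ($p$ then $q$) if the target of $p$ is the source of $q$, else $0$. $\Pi_Q=\Bbbk\overline{Q}/(\Omega)$, graded by path length, with $(\Omega)$ generated by $a_i^*a_i-a_{i+1}a_{i+1}^*$; the action descends if $(\Omega)$ is stable under $g$ and $x$. The invariant ring is $(\Pi_Q)^T=\{a\in\Pi_Q:h\cdot a=\varepsilon(h)a\ \forall h\in T\}$. For a path $p$ and integer $\alpha$, $\phi_\alpha(p)=\sum_{i=0}^{r-1}\lambda^{-\alpha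 i}g^i(p)$. *)

From HB Require Import structures.
From mathcomp Require Import all_boot all_order all_algebra.
Set Implicit Arguments.
Unset Strict Implicit.
Unset Printing Implicit Defensive.
Import GRing.Theory.
Local Open Scope ring_scope.

(* The path algebra k\bar{Q} of the doubled cyclic quiver with n vertices. *)
(* A path is (source vertex, sequence of steps), step true = an arrow   *)
(* a_v : v -> v+1, step false = an arrow a_{v-1}^* : v -> v-1.          *)
(* Each vertex has exactly one outgoing arrow of each kind, so this     *)
(* enumerates all paths; the trivial path e_i is (i, [::]).             *)
(* Elements of k\bar{Q} are finitely supported functions path -> K      *)
(* (coefficients), the product is concatenation extended bilinearly.    *)
Section PathAlgebra.
Variables (n : nat) (K : fieldType).

Definition vert := 'Z_n.
Definition path := (vert * seq bool)%type.

Definition tgt (p : path) : vert :=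
  p.1 + (count id p.2)%:R - (count negb p.2)%:R.

Definition elt := path -> K.

Definition pa_zero : elt := fun _ => 0.
Definition pa_add (f h : elt) : elt := fun p => f p + h p.
Definition pa_scale (c : K) (f : elt) : elt := fun p => c * f p.

(* coefficient of q in f*h = sum over all factorisations q = p p' *)
Definition pa_mul (f h : elt) : elt := fun q =>
  \sum_(k < (size q.2).+1)
     f (q.1, take k q.2) * h (tgt (q.1, take k q.2), drop k q.2).

Definition delta (p : path) : elt := fun q => (q == p)%:R.
Definition ev (i : vert) : elt := delta (i, [::]).
Definition arr (i : vert) : elt := delta (i, [:: true]).
Definition arrs (i : vert) : elt := delta (i + 1, [:: false]).

Definition pa_one : elt := \big[pa_add/pa_zero]_(i : vert) ev i.

Definition finsupp (f : elt) : Prop :=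
  exists s : seq path, forall p, p \notin s -> f p = 0.

Definition deg0 (f : elt) : Prop := forall p : path, p.2 != [::] -> f p = 0.

Definition omega (i : vert) : elt :=
  pa_add (pa_mul (arrs i) (arr i)) (pa_scale (-1) (pa_mul (arr (i + 1)) (arrs (i + 1)))).

Definition inOmega (f : elt) : Prop :=
  exists s : seq (elt * vert * elt),
    foldr (fun t P => (finsupp t.1.1 /\ finsupp t.2) /\ P) True s /\
    f = foldr (fun t acc => pa_add (pa_mul (pa_mul t.1.1 (omega t.1.2)) t.2) acc) pa_zero s.

End PathAlgebra.
Arguments pa_zero {n K}.
Arguments pa_one {n K}.

(* The generalized Taft algebra T_lam(r,m), with its PBW basis         *)
(* g^a x^b (a < m, b < r); an element is its coefficient function.     *)
Notation idx m r := ('I_m * 'I_r)%type.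
Notation Tel K m r := {ffun idx m r -> K}.
Notation TTel K m r := {ffun (idx m r * idx m r) -> K}.

Section Taft.
Variables (K : fieldType) (m r : nat) (lam : K).
Local Notation idx := (idx m r).
Local Notation Tel := (Tel K m r).
Local Notation TTel := (TTel K m r).

(* g^a x^b * g^c x^d = lam^-(b c) g^(a+c mod m) x^(b+d)  (0 if b+d >= r) *)
Definition cT (i j k : idx) : K :=
  if ((k.1 : nat) == (i.1 + j.1) %% m)%N && ((k.2 : nat) == i.2 + j.2)%N
  then lam ^- (i.2 * j.1)%N else 0.

(* scalar multiplication (ffun has no canonical lmod structure) *)
Definition sclT (c : K) (u : Tel) : Tel := [ffun k => c * u k].
Definition sclTT (c : K) (w : TTel) : TTel := [ffun k => c * w k].

Definition mulT (u v : Tel) : Tel :=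
  [ffun k => \sum_(i : idx) \sum_(j : idx) u i * v j * cT i j k].

Definition bT (a b : nat) : Tel :=
  [ffun k : idx => (((k.1 : nat) == a) && ((k.2 : nat) == b))%:R].

Definition oneT : Tel := bT 0 0.
Definition gT : Tel := bT (1 %% m) 0.
Definition xT : Tel := bT 0 1.
Definition gInvT : Tel := bT m.-1 0.
Definition powT (u : Tel) (k : nat) : Tel := iter k (mulT u) oneT.

Definition epsT (u : Tel) : K := \sum_(k : idx) u k * ((k.2 : nat) == 0)%N%:R.

Definition ST (u : Tel) : Tel :=
  \sum_(k : idx) sclT (u k) (mulT (powT (- mulT xT gInvT) k.2) (powT gInvT k.1)).

Definition tens (t s : Tel) : TTel := [ffun k => t k.1 * s k.2].
Definition mulTT (w z : TTel) : TTel :=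
  [ffun k : idx * idx => \sum_(i : idx * idx) \sum_(j : idx * idx)
      w i * z j * (cT i.1 j.1 k.1 * cT i.2 j.2 k.2)].
Definition powTT (w : TTel) (k : nat) : TTel := iter k (mulTT w) (tens oneT oneT).

Definition DeltaT (u : Tel) : TTel :=
  \sum_(k : idx) sclTT (u k) (mulTT (powTT (tens gT gT) k.1)
                             (powTT (tens oneT xT + tens xT gT) k.2)).

Definition HopfIdeal (I : Tel -> Prop) : Prop :=
  I 0 /\
  (forall u v, I u -> I v -> I (u + v)) /\
  (forall c u, I u -> I (sclT c u)) /\
  (forall t u, I u -> I (mulT t u) /\ I (mulT u t)) /\
  (forall u, I u -> epsT u = 0) /\
  (forall u, I u -> I (ST u)) /\
  (forall u, I u -> exists s1 s2 : seq (Tel * Tel),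
      [/\ (forall p, p \in s1 -> I p.1),
          (forall p, p \in s2 -> I p.2) &
          DeltaT u = \sum_(p <- s1) tens p.1 p.2
                     + \sum_(p <- s2) tens p.1 p.2]).

(* inner faithfulness w.r.t. an annihilation predicate ann u <-> u . A = 0 *)
Definition inner_faithful (ann : Tel -> Prop) : Prop :=
  forall I, HopfIdeal I -> (forall u, I u -> ann u) -> forall u, I u -> u = 0.

End Taft.

(* Actions of T on k\bar{Q} given by the actions G, X of g and x.       *)
Section Action.
Variables (n : nat) (K : fieldType) (m r : nat) (lam : K).
Variables (G X : elt n K -> elt n K).

Definition actT (u : Tel K m r) (f : elt n K) : elt n K :=
  \big[@pa_add n K/@pa_zero n K]_(k : idx m r)
     pa_scale (u k) (iter k.1 G (iter k.2 X f)).

Definition is_Taft_module_algebra : Prop :=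
  (forall f, finsupp f -> finsupp (G f) /\ finsupp (X f)) /\
  (forall f h, finsupp f -> finsupp h ->
      G (pa_add f h) = pa_add (G f) (G h) /\ X (pa_add f h) = pa_add (X f) (X h)) /\
  (forall c f, finsupp f ->
      G (pa_scale c f) = pa_scale c (G f) /\ X (pa_scale c f) = pa_scale c (X f)) /\
  (forall f, finsupp f ->
      [/\ iter m G f = f, iter r X f = @pa_zero n K & G (X f) = pa_scale lam (X (G f))]) /\
  (G (@pa_one n K) = @pa_one n K /\ X (@pa_one n K) = @pa_zero n K) /\
  (forall f h, finsupp f -> finsupp h -> G (pa_mul f h) = pa_mul (G f) (G h)) /\
  (forall f h, finsupp f -> finsupp h ->
      X (pa_mul f h) = pa_add (pa_mul f (X h)) (pa_mul (X f) (G h))).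

Definition invPi (f : elt n K) : Prop :=
  forall u : Tel K m r, inOmega (pa_add (actT u f) (pa_scale (- epsT u) f)).

Definition phi (alpha : int) (p : elt n K) : elt n K :=
  \big[@pa_add n K/@pa_zero n K]_(k < r) pa_scale (lam ^ (- (alpha * k%:Z))) (iter k G p).

End Action.

From mathcomp Require Import all_boot all_order all_algebra.
From Stdlib Require Import FunctionalExtensionality.
From mathcomp Require Import ring.

(* In degree 0 everything is explicit: an element is a combination of the e_w, g shifts
   w to w + d, and x acts on e_w by gam w (e_w - lam^-1 e_(w+d)).  The ideal (Omega) has
   no degree-0 part, so a degree-0 element is g-invariant in Pi_Q exactly when its
   coefficients are constant along w |-> w + d, i.e. on the residue classes modulo
   tau = gcd(n, d); these are the span of the indicator functions of the classes.
   Since g^r = 1, the orbit length n / tau divides r; since x . 1 = 0 we get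
   lam gam (w + d) = gam w, and going once around an orbit gives lam^(n / tau) = 1, so
   r divides n / tau.  Hence phi_0(e_i) = e_i + e_(i+d) + ... + e_(i+(r-1)d) is exactly
   the indicator of the class of i, it is fixed by g, and it is killed by x. *)

Set Implicit Arguments.
Unset Strict Implicit.
Unset Printing Implicit Defensive.
Import GRing.Theory.
Local Open Scope ring_scope.

Lemma dvdn_mul_gcd n d k : (0 < n)%N ->
  (n %| k * d)%N = (n %/ gcdn n d %| k)%N.
Proof.
move=> n_gt0; have tau_gt0 : (0 < gcdn n d)%N by rewrite gcdn_gt0 n_gt0.
rewrite -[RHS](dvdn_pmul2r tau_gt0) divnK ?dvdn_gcdl // gcdnC muln_gcdr.
by rewrite dvdn_gcd (dvdn_mull k (dvdnn n)) andbT.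
Qed.

Lemma sum_mul_eq (R : pzSemiRingType) (T : finType) (F : T -> R) a :
  \sum_(x : T) F x * (x == a)%:R = F a.
Proof.
by rewrite (bigD1 a) //= eqxx mulr1 big1 ?addr0 // => x /negbTE->; rewrite mulr0.
Qed.

Lemma sum_mul_eq_shift (R : pzSemiRingType) (V : finZmodType) (F : V -> R) (s w : V) :
  \sum_(x : V) F x * (w == x + s)%:R = F (w - s).
Proof.
by under eq_bigr => x _ do rewrite -subr_eq eq_sym; rewrite sum_mul_eq.
Qed.

Lemma Zp_nat_eq0 n x : (1 < n)%N -> ((x%:R : 'Z_n) == 0) = (n %| x)%N.
Proof. by move=> n_gt1; rewrite -val_eqE /= val_Zp_nat. Qed.

Section CyclicOrbits.
Variables (n d : nat).
Hypothesis n_gt1 : (1 < n)%N.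
Local Notation tau := (gcdn n d).

Definition orbit_vertex (ik : 'I_tau * 'I_(n %/ tau)) : 'Z_n := (ik.1 + ik.2 * d)%N%:R.

Lemma orbit_vertex_mod ik : (orbit_vertex ik %% tau)%N = ik.1.
Proof.
case: ik => i k; rewrite /orbit_vertex val_Zp_nat // modn_dvdm ?dvdn_gcdl //=.
by rewrite -modnDmr (eqP (dvdn_mull k (dvdn_gcdr n d))) addn0 modn_small.
Qed.

Lemma orbit_vertex_inj : injective orbit_vertex.
Proof.
have mul_d_inj k1 k2 : (k1 < n %/ tau)%N -> (k2 <= k1)%N ->
    (k1 * d == k2 * d %[mod n])%N -> k1 = k2.
  move=> lt_k1 le_k21; rewrite eqn_mod_dvd ?leq_mul2r ?le_k21 ?orbT // -mulnBl.
  rewrite dvdn_mul_gcd ?(ltnW n_gt1) // /dvdn modn_small; last first.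
    exact: leq_ltn_trans (leq_subr _ _) lt_k1.
  by rewrite subn_eq0 => le_k12; apply/eqP; rewrite eqn_leq le_k12.
move=> [i k] [i' k'] eq_ik.
have eq_i : i = i'.
  by apply: val_inj; have := orbit_vertex_mod (i, k); rewrite eq_ik orbit_vertex_mod /= => ->.
subst i'; congr pair; apply: val_inj.
have : (k * d == k' * d %[mod n])%N.
  move/(congr1 (@nat_of_ord _)): eq_ik.
  by rewrite /orbit_vertex !val_Zp_nat //= => /eqP; rewrite eqn_modDl.
case: (leqP k' k) => [le_k'k | /ltnW le_kk'] eq_kd.
  exact: mul_d_inj (ltn_ord k) le_k'k eq_kd.
by apply/esym/(mul_d_inj _ _ (ltn_ord k') le_kk'); rewrite eq_sym.
Qed.

Lemma orbit_vertex_surj w : exists ik, w = orbit_vertex ik.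
Proof.
apply/codomP/(inj_card_onto orbit_vertex_inj).
by rewrite card_prod !card_ord (Zp_cast n_gt1) mulnC divnK ?dvdn_gcdl.
Qed.

Lemma sum_orbit_indicator (R : pzSemiRingType) (i : 'I_tau) (w : 'Z_n) :
  \sum_(k < n %/ tau) ((w == (i + k * d)%N%:R)%:R : R) = ((w %% tau)%N == i)%:R.
Proof.
under eq_bigr => k _ do rewrite -[(i + k * d)%N%:R]/(orbit_vertex (i, k)).
have [[j k] ->] := orbit_vertex_surj w; rewrite orbit_vertex_mod /=.
under eq_bigr => k' _ do rewrite (inj_eq orbit_vertex_inj) xpair_eqE.
have [/val_inj-> | ne_ji] := eqVneq (j : nat) i; last first.
  by rewrite big1 // => k' _; rewrite -val_eqE (negbTE ne_ji).
under eq_bigr => k' _ do rewrite eqxx eq_sym -[_%:R]mul1r.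
by rewrite sum_mul_eq.
Qed.

Lemma Zp_mod_gcd_addd (w : 'Z_n) : (((w + d%:R)%R : 'Z_n) %% tau)%N = (w %% tau)%N.
Proof.
have /eqP d_mod_tau : (d %% tau == 0)%N := dvdn_gcdr n d.
rewrite -[w in (w + _)%R]natr_Zp -natrD val_Zp_nat // modn_dvdm ?dvdn_gcdl //.
by rewrite -modnDmr d_mod_tau addn0.
Qed.

Lemma shift_invariant_mod (T : Type) (f : 'Z_n -> T) :
  (forall w, f (w + d%:R) = f w) -> forall w, f w = f (w %% tau)%N%:R.
Proof.
move=> f_d w; have [[i k] ->] := orbit_vertex_surj w.
rewrite orbit_vertex_mod /orbit_vertex /=.
elim: (val k) => [|k' IHk]; first by rewrite mul0n addn0.
by rewrite mulSn addnCA natrD addrC f_d.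
Qed.

End CyclicOrbits.

Section PathAlgebraDegreeZero.
Variables (n : nat) (K : fieldType).
Implicit Types (f h : elt n K) (w : vert n) (l : seq bool).

Lemma big_pa_addE (I : Type) (s : seq I) (P : pred I) (F : I -> elt n K) p :
  (\big[@pa_add n K/pa_zero]_(i <- s | P i) F i) p = \sum_(i <- s | P i) F i p.
Proof. by apply: (big_morph (fun f : elt n K => f p)). Qed.

Lemma finsupp_zero : finsupp (@pa_zero n K).
Proof. by exists [::]. Qed.

Lemma finsupp_add f h : finsupp f -> finsupp h -> finsupp (pa_add f h).
Proof.
move=> [s1 f0] [s2 h0]; exists (s1 ++ s2) => p.
by rewrite mem_cat negb_or => /andP[p1 p2]; rewrite /pa_add f0 // h0 // addr0.
Qed.

Lemma finsupp_scale c f : finsupp f -> finsupp (pa_scale c f).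
Proof. by move=> [s f0]; exists s => p /f0; rewrite /pa_scale => ->; rewrite mulr0. Qed.

Lemma finsupp_ev w : finsupp (ev K w).
Proof. by exists [:: (w, [::])] => p; rewrite inE /ev /delta => /negbTE ->. Qed.

Lemma finsupp_big (I : Type) (s : seq I) (F : I -> elt n K) :
  (forall i, finsupp (F i)) -> finsupp (\big[@pa_add n K/pa_zero]_(i <- s) F i).
Proof.
move=> FP; elim: s => [|i s IHs]; first by rewrite big_nil; apply: finsupp_zero.
by rewrite big_cons; apply: finsupp_add.
Qed.

Lemma pa_scale0 f : pa_scale 0 f = pa_zero.
Proof. by apply: functional_extensionality => p; rewrite /pa_scale mul0r. Qed.

Lemma scalable_pa_zero (L : elt n K -> elt n K) :
  (forall c f, finsupp f -> L (pa_scale c f) = pa_scale c (L f)) ->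
  L pa_zero = pa_zero.
Proof.
by move=> LZ; rewrite -{1}(pa_scale0 pa_zero) LZ; [apply: pa_scale0 | apply: finsupp_zero].
Qed.

Lemma ev_apply a w l : ev K a (w, l) = (w == a)%:R * (l == [::])%:R.
Proof. by rewrite /ev /delta xpair_eqE; case: (w == a); rewrite ?mul1r ?mul0r. Qed.

Lemma ev_inj : injective (@ev n K).
Proof.
move=> a b /(congr1 (fun f => f (a, [::]))); rewrite !ev_apply !eqxx /= !mulr1.
by case: eqP => // _ /eqP; rewrite oner_eq0.
Qed.

Lemma deg0_sum_ev f : deg0 f ->
  f = \big[@pa_add n K/pa_zero]_w pa_scale (f (w, [::])) (ev K w).
Proof.
move=> f0; apply: functional_extensionality => -[w l]; rewrite big_pa_addE.
under eq_bigr => a _ do rewrite /pa_scale ev_apply mulrA.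
rewrite -mulr_suml.
have [-> | ln] := eqVneq l [::]; last by rewrite (f0 (w, l)) ?mulr0.
under eq_bigr => a _ do rewrite -[a in w == a]addr0.
by rewrite /= mulr1 sum_mul_eq_shift subr0.
Qed.

Lemma deg0_finsupp f : deg0 f -> finsupp f.
Proof.
move=> f0; rewrite (deg0_sum_ev f0).
by apply: finsupp_big => w; apply/finsupp_scale/finsupp_ev.
Qed.

Lemma additive_pa_big (L : elt n K -> elt n K) (I : Type) (s : seq I) (F : I -> elt n K) :
  (forall f h, finsupp f -> finsupp h -> L (pa_add f h) = pa_add (L f) (L h)) ->
  L pa_zero = pa_zero -> (forall i, finsupp (F i)) ->
  L (\big[@pa_add n K/pa_zero]_(i <- s) F i) = \big[@pa_add n K/pa_zero]_(i <- s) L (F i).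
Proof.
move=> LD L0 FP; elim: s => [|i s IHs]; first by rewrite !big_nil.
by rewrite !big_cons LD ?IHs //; apply: finsupp_big.
Qed.

Lemma linear_deg0_apply (L : elt n K -> elt n K) f p :
  (forall f h, finsupp f -> finsupp h -> L (pa_add f h) = pa_add (L f) (L h)) ->
  (forall c f, finsupp f -> L (pa_scale c f) = pa_scale c (L f)) ->
  deg0 f -> L f p = \sum_w f (w, [::]) * L (ev K w) p.
Proof.
move=> LD LZ f0; rewrite {1}(deg0_sum_ev f0) additive_pa_big //; last first.
- by move=> w; apply/finsupp_scale/finsupp_ev.
- exact: scalable_pa_zero.
by rewrite big_pa_addE; apply: eq_bigr => w _; rewrite LZ //; apply: finsupp_ev.
Qed.

Lemma pa_one_apply w l : @pa_one n K (w, l) = (l == [::])%:R.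
Proof.
rewrite /pa_one big_pa_addE.
under eq_bigr => a _ do rewrite ev_apply -[a in w == a]addr0 -[(w == _)%:R]mul1r.
by rewrite -mulr_suml sum_mul_eq_shift mul1r.
Qed.

Lemma pa_one_deg0 : deg0 (@pa_one n K).
Proof. by move=> [w l] /= ln; rewrite pa_one_apply (negbTE ln). Qed.

Lemma pa_mul_nil f h w : pa_mul f h (w, [::]) = f (w, [::]) * h (w, [::]).
Proof. by rewrite /pa_mul big_ord_recl big_ord0 addr0 /tgt /= subr0 addr0. Qed.

Lemma inOmega_nil f w : inOmega f -> f (w, [::]) = 0.
Proof.
move=> [s [_ ->]]; elim: s => [|t s IHs] //=.
rewrite /pa_add IHs addr0 !pa_mul_nil /omega /pa_add /pa_scale !pa_mul_nil.
by rewrite /arr /arrs /delta !xpair_eqE !andbF !(mulr0, mul0r, addr0).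
Qed.

Lemma inOmega_zero : inOmega (@pa_zero n K).
Proof. by exists [::]. Qed.

End PathAlgebraDegreeZero.

Section InvariantsOfTaftActions.
Variables (n : nat) (K : fieldType) (m r : nat) (G X : elt n K -> elt n K).

Lemma invPi_of_fixed v : G v = v -> X v = pa_zero ->
  G pa_zero = pa_zero -> X pa_zero = pa_zero -> invPi m r G X v.
Proof.
move=> Gv Xv G0 X0 u.
have iterXv b : iter b.+1 X v = pa_zero by elim: b => /= [|b ->].
have iterGXv a b : iter a G (iter b X v) = iter b X v.
  by case: b => [|b]; rewrite ?iterXv; elim: a => //= a ->.
have -> : pa_add (actT G X u v) (pa_scale (- epsT u) v) = pa_zero.
  apply: functional_extensionality => p.
  rewrite /pa_add /actT big_pa_addE /pa_scale /epsT mulNr mulr_suml -sumrN -big_split.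
  apply: big1 => -[a [[|b] ?]] _; rewrite /pa_scale iterGXv; first by rewrite /=; ring.
  by rewrite iterXv /pa_zero /=; ring.
exact: inOmega_zero.
Qed.

Lemma invPi_G_nil f w : (1 < m)%N -> (0 < r)%N ->
  invPi m r G X f -> G f (w, [::]) = f (w, [::]).
Proof.
move=> m_gt1 r_gt0 fP; have := inOmega_nil w (fP (bT K m r 1 0)).
pose g_idx : idx m r := (Ordinal m_gt1, Ordinal r_gt0).
have bT_g k : bT K m r 1 0 k = (k == g_idx)%:R by case: k => a b; rewrite ffunE xpair_eqE.
rewrite /pa_add /actT big_pa_addE /pa_scale /epsT.
under eq_bigr => k _ do rewrite /pa_scale bT_g mulrC.
under [X in _ + - X * _ = _]eq_bigr => k _ do rewrite bT_g mulrC.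
by rewrite !sum_mul_eq /= mulN1r => /eqP; rewrite subr_eq0 => /eqP.
Qed.

End InvariantsOfTaftActions.

Section DegreeZeroInvariants.
Variables (K : fieldType) (n r d : nat) (lam : K) (gam : vert n -> K).
Variables (G X : elt n K -> elt n K).
Hypotheses (n_gt1 : (1 < n)%N) (r_gt1 : (1 < r)%N) (lam_prim : r.-primitive_root lam).
Hypothesis gam_neq0 : forall i, gam i != 0.
Hypothesis taft_action : is_Taft_module_algebra r r lam G X.
Hypothesis G_ev : forall i, G (ev K i) = ev K (i + d%:R).
Hypothesis X_ev : forall i, X (ev K i) =
  pa_scale (gam i) (pa_add (ev K i) (pa_scale (- lam^-1) (ev K (i + d%:R)))).

Local Notation tau := (gcdn n d).
Local Notation phi0 := (phi r lam G 0).

Let G_add f h : finsupp f -> finsupp h -> G (pa_add f h) = pa_add (G f) (G h).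
Proof. by case: taft_action => _ [GX_add _] f_fin h_fin; case: (GX_add f h f_fin h_fin). Qed.

Let X_add f h : finsupp f -> finsupp h -> X (pa_add f h) = pa_add (X f) (X h).
Proof. by case: taft_action => _ [GX_add _] f_fin h_fin; case: (GX_add f h f_fin h_fin). Qed.

Let G_scale c f : finsupp f -> G (pa_scale c f) = pa_scale c (G f).
Proof. by case: taft_action => _ [_ [GX_scale _]] f_fin; case: (GX_scale c f f_fin). Qed.

Let X_scale c f : finsupp f -> X (pa_scale c f) = pa_scale c (X f).
Proof. by case: taft_action => _ [_ [GX_scale _]] f_fin; case: (GX_scale c f f_fin). Qed.

Let G_period : iter r G (ev K 0) = ev K 0.
Proof. by case: taft_action => _ [_ [_ [GX_rel _]]]; case: (GX_rel _ (finsupp_ev K 0)). Qed.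

Let X_one : X pa_one = pa_zero.
Proof. by case: taft_action => _ [_ [_ [_ [[_ X1] _]]]]. Qed.

Let r_gt0 : (0 < r)%N. Proof. exact: ltnW. Qed.

Let lam_neq0 : lam != 0.
Proof.
apply/eqP => lam0; move: (prim_expr_order lam_prim).
by rewrite lam0 expr0n gtn_eqF // => /eqP; rewrite eq_sym oner_eq0.
Qed.

Lemma G_deg0_apply f w l : deg0 f -> G f (w, l) = f (w - d%:R, [::]) * (l == [::])%:R.
Proof.
move=> f0; rewrite (linear_deg0_apply (w, l) G_add G_scale f0).
under eq_bigr => a _ do rewrite G_ev ev_apply mulrA.
by rewrite -mulr_suml sum_mul_eq_shift.
Qed.

Lemma X_deg0_apply f w l : deg0 f -> X f (w, l) =
  (gam w * f (w, [::]) - lam^-1 * gam (w - d%:R) * f (w - d%:R, [::])) * (l == [::])%:R.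
Proof.
move=> f0; rewrite (linear_deg0_apply (w, l) X_add X_scale f0).
have -> : \sum_a f (a, [::]) * X (ev K a) (w, l) =
    (\sum_a (f (a, [::]) * gam a) * (w == a + 0)%:R
     - \sum_a (f (a, [::]) * gam a * lam^-1) * (w == a + d%:R)%:R) * (l == [::])%:R.
  rewrite mulrBl !mulr_suml -sumrB; apply: eq_bigr => a _.
  by rewrite X_ev /pa_scale /pa_add /pa_scale !ev_apply addr0; ring.
by rewrite !sum_mul_eq_shift subr0; congr (_ * _); ring.
Qed.

Lemma gam_shift w : lam * gam (w + d%:R) = gam w.
Proof.
have := X_deg0_apply (w + d%:R) [::] (@pa_one_deg0 n K).
rewrite X_one !pa_one_apply eqxx addrK /= !mulr1 => /eqP.
by rewrite eq_sym subr_eq0 => /eqP ->; rewrite mulrA mulfV // mul1r.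
Qed.

Lemma iter_G_ev k a : iter k G (ev K a) = ev K (a + (k * d)%:R).
Proof.
elim: k => [|k IHk] /=; first by rewrite mul0n addr0.
by rewrite IHk G_ev mulSn natrD (addrC d%:R) addrA.
Qed.

Lemma orbit_length : (n %/ tau)%N = r.
Proof.
have gam_iter k w : lam ^+ k * gam (w + (k * d)%:R) = gam w.
  elim: k w => [|k IHk] w; first by rewrite mul0n addr0 expr0 mul1r.
  by rewrite mulSn natrD (addrC d%:R) addrA exprSr -mulrA gam_shift IHk.
have n_dvd_rd : (n %| r * d)%N.
  have := iter_G_ev r 0; rewrite G_period add0r => /ev_inj/esym/eqP.
  by rewrite Zp_nat_eq0.
have n_dvd_taud : (n %| n %/ tau * d)%N by rewrite dvdn_mul_gcd ?(ltnW n_gt1).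
apply/eqP; rewrite eqn_dvd -dvdn_mul_gcd ?(ltnW n_gt1) // n_dvd_rd /=.
rewrite (prim_order_dvd lam_prim); have := gam_iter (n %/ tau)%N 0.
rewrite (eqP (_ : (n %/ tau * d)%N%:R == 0 :> 'Z_n)) ?Zp_nat_eq0 // addr0.
by rewrite -{2}[gam 0]mul1r => /(mulIf (gam_neq0 0))->.
Qed.

Lemma phi0_ev_apply (i : 'I_tau) w l :
  phi0 (ev K i%:R) (w, l) = ((w %% tau)%N == i)%:R * (l == [::])%:R.
Proof.
rewrite /phi big_pa_addE.
under eq_bigr => k _ do rewrite /pa_scale mul0r oppr0 expr0z mul1r iter_G_ev -natrD ev_apply.
by rewrite -mulr_suml -(sum_orbit_indicator n_gt1) orbit_length.
Qed.

Lemma phi0_ev_deg0 (i : 'I_tau) : deg0 (phi0 (ev K i%:R)).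
Proof. by move=> [w l] /= ln; rewrite phi0_ev_apply (negbTE ln) mulr0. Qed.

Lemma G_phi0_ev (i : 'I_tau) : G (phi0 (ev K i%:R)) = phi0 (ev K i%:R).
Proof.
apply: functional_extensionality => -[w l].
rewrite G_deg0_apply ?phi0_ev_apply; last exact: phi0_ev_deg0.
have := Zp_mod_gcd_addd d n_gt1 (w - d%:R); rewrite subrK => ->.
by rewrite eqxx /= mulr1.
Qed.

Lemma X_phi0_ev (i : 'I_tau) : X (phi0 (ev K i%:R)) = pa_zero.
Proof.
apply: functional_extensionality => -[w l].
rewrite X_deg0_apply ?phi0_ev_apply; last exact: phi0_ev_deg0.
have := Zp_mod_gcd_addd d n_gt1 (w - d%:R); rewrite subrK => ->.
by rewrite -[gam (w - d%:R)]gam_shift subrK mulKf // subrr mul0r.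
Qed.

Lemma phi0_ev_invariant (i : 'I_tau) :
  let v := phi0 (ev K i%:R) in [/\ finsupp v, deg0 v & invPi r r G X v].
Proof.
split; [exact/deg0_finsupp/phi0_ev_deg0 | exact: phi0_ev_deg0 |].
by apply: invPi_of_fixed; [exact: G_phi0_ev | exact: X_phi0_ev | exact: scalable_pa_zero ..].
Qed.

Lemma phi0_ev_free (c : 'I_tau -> K) :
  inOmega (\big[@pa_add n K/pa_zero]_(i < tau) pa_scale (c i) (phi0 (ev K i%:R))) ->
  forall i, c i = 0.
Proof.
move=> c_Omega i; have := inOmega_nil (i%:R) c_Omega.
have i_lt_n : (i < n)%N.
  exact: leq_trans (ltn_ord i) (dvdn_leq (ltnW n_gt1) (dvdn_gcdl n d)).
rewrite big_pa_addE.
under eq_bigr => j _ do rewrite /pa_scale phi0_ev_apply eqxx /= mulr1.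
rewrite val_Zp_nat // !modn_small //.
by under eq_bigr => j _ do rewrite eq_sym val_eqE; rewrite sum_mul_eq.
Qed.

Lemma phi0_ev_span f : deg0 f -> invPi r r G X f ->
  exists c : 'I_tau -> K,
    inOmega (pa_add f (pa_scale (-1)
      (\big[@pa_add n K/pa_zero]_(i < tau) pa_scale (c i) (phi0 (ev K i%:R))))).
Proof.
move=> f0 f_inv; exists (fun i => f (i%:R, [::])).
have f_shift w : f (w + d%:R, [::]) = f (w, [::]).
  rewrite -(invPi_G_nil (w + d%:R) r_gt1 r_gt0 f_inv).
  by rewrite G_deg0_apply // addrK /= mulr1.
suff -> : pa_add f (pa_scale (-1) (\big[@pa_add n K/pa_zero]_(i < tau)
    pa_scale (f (i%:R, [::])) (phi0 (ev K i%:R)))) = pa_zero by apply: inOmega_zero.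
apply: functional_extensionality => -[w l]; rewrite /pa_add /pa_scale big_pa_addE.
under eq_bigr => i _ do rewrite /pa_scale phi0_ev_apply mulrA.
rewrite -mulr_suml; have [-> | ln] := eqVneq l [::]; last first.
  by rewrite (f0 (w, l)) // mulr0 mulr0 addr0.
have tau_gt0 : (0 < tau)%N by rewrite gcdn_gt0 (ltnW n_gt1).
pose w_mod : 'I_tau := Ordinal (ltn_pmod w tau_gt0).
under eq_bigr => i _ do rewrite eq_sym -[(i : nat) == _]/(i == w_mod).
rewrite sum_mul_eq /= mulr1 mulN1r.
by rewrite -(@shift_invariant_mod _ _ n_gt1 _ (fun v => f (v, [::])) f_shift) subrr.
Qed.

End DegreeZeroInvariants.

Theorem lemma4p2 (K : fieldType) (r n d : nat) (lam : K)
  (mu mus gam : vert n -> K) (G X : elt n K -> elt n K) :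
  (1 < r)%N -> r.-primitive_root lam ->
  (forall p : nat, p \in [pchar K] -> ~~ (p %| r)%N) ->
  (3 <= n)%N -> (0 < d)%N -> (d <= n - 1)%N ->
  (forall i, mu i != 0) -> (forall i, mus i != 0) -> (forall i, gam i != 0) ->
  (* T = T_lam(r, m) with m = r acts on k\bar{Q} via G = (g . -), X = (x . -) *)
  is_Taft_module_algebra r r lam G X ->
  (forall i, G (ev K i) = ev K (i + d%:R)) ->
  (forall i, G (arr K i) = pa_scale (mu i) (arr K (i + d%:R))) ->
  (forall i, G (arrs K i) = pa_scale (mus i) (arrs K (i + d%:R))) ->
  (forall i, X (ev K i) =
     pa_scale (gam i) (pa_add (ev K i) (pa_scale (- lam^-1) (ev K (i + d%:R))))) ->
  (forall i, X (arr K i) =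
     pa_add (pa_scale (gam (i + 1)) (arr K i)) (pa_scale (- (gam i * lam^-1)) (G (arr K i)))) ->
  (forall i, X (arrs K i) =
     pa_add (pa_scale (gam i) (arrs K i)) (pa_scale (- (gam (i + 1) * lam^-1)) (G (arrs K i)))) ->
  (* inner faithful on k\bar{Q} *)
  inner_faithful (m := r) (r := r) lam
    (fun u => forall f, finsupp f -> actT G X u f = pa_zero) ->
  (* the action descends to Pi_Q = k\bar{Q}/(Omega) ... *)
  (forall f, inOmega f -> inOmega (G f) /\ inOmega (X f)) ->
  (* ... and is inner faithful there *)
  inner_faithful (m := r) (r := r) lam
    (fun u => forall f, finsupp f -> inOmega (actT G X u f)) ->
  let tau := gcdn n d in
  (* the classes of phi_0(e_i), i < tau, form a basis of ((Pi_Q)^T)_0 *)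
  (forall i : 'I_tau,
     let v := phi r lam G 0 (ev K (i%:R)) in
     [/\ finsupp v, deg0 v & invPi r r G X v]) /\
  (forall c : 'I_tau -> K,
     inOmega (\big[@pa_add n K/pa_zero]_(i < tau) pa_scale (c i) (phi r lam G 0 (ev K (i%:R)))) ->
     forall i, c i = 0) /\
  (forall f, finsupp f -> deg0 f -> invPi r r G X f ->
     exists c : 'I_tau -> K,
       inOmega (pa_add f (pa_scale (-1)
         (\big[@pa_add n K/pa_zero]_(i < tau) pa_scale (c i) (phi r lam G 0 (ev K (i%:R))))))).
Proof.
move=> r_gt1 lam_prim _ n_ge3 _ _ _ _ gam_neq0 taft_action G_ev _ _ X_ev _ _ _ _ _ tau.
have n_gt1 : (1 < n)%N by apply: leq_trans n_ge3.
split; last split.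
- exact: (phi0_ev_invariant n_gt1 r_gt1 lam_prim gam_neq0 taft_action G_ev X_ev).
- exact: (phi0_ev_free n_gt1 r_gt1 lam_prim gam_neq0 taft_action G_ev X_ev).
- move=> f _; exact: (phi0_ev_span n_gt1 r_gt1 lam_prim gam_neq0 taft_action G_ev X_ev).
Qed.
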